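(* Let $M$ be a finite-dimensional left $\mathsf{VBr}_{r,t}(\omega)$-module, $\mathbf a\in\mathrm{Seq}_{r,t}$, $\mathbf i\in\mathbb C^{r+t}$ and $k\in\{1,\dots,r+t-1\}$. Suppose that either (a) $a_k=a_{k+1}$, $\mathrm i_{k+1}\notin\{\mathrm i_k,\mathrm i_k+1,\mathrm i_k-1\}$ and $(y_k-\mathrm i_{k+1})1_{\mathbf a}M_{\mathsf s_k\mathbf i}=0$; or (b) $a_k\ne a_{k+1}$, $\mathrm i_k+\mathrm i_{k+1}\ne0$ and $(y_k-\mathrm i_{k+1})1_{\mathsf s_k\mathbf a}M_{\mathsf s_k\mathbf i}=0$. Then $(y_{k+1}-\mathrm i_{k+1})1_{\mathbf a}M_{\mathbf i}=0$.
   Context: $\mathrm{Seq}_{r,t}$: sequences $\mathbf a\in\{\wedge,\vee\}^{r+t}$ with exactly $r$ entries $\wedge$; $J=\{1,\dots,r+t-1\}$; $\mathsf s_k$ swaps entries $k,k+1$ (of sequences and of vectors in $\mathbb C^{r+t}$). $\mathrm{Br}_{r,t}(\gamma)$: basis oriented Brauer diagrams $\mathbf a\to\mathbf b$ (perfect matchings between bottom row labelled $\mathbf a$ and top row labelled $\mathbf b$; bottom-to-top strands join equal labels, strands within a row join different labels), product by stacking (second factor below), $0$ if labels mismatch, loops replaced by $\gamma$. $1_{\mathbf a}$ identity; for $k\in J$: if $a_k=a_{k+1}$, $s_k1_{\mathbf a}$ crosses strands $k,k+1$ ($\mathbf a\to\mathbf a$); if $a_k\neq a_{k+1}$, $\hat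 s_k1_{\mathbf a}$ crossing $\mathbf a\to\mathsf s_k\mathbf a$, $e_k1_{\mathbf a}$ cap at bottom $k,k+1$ and cup at top $k,k+1$ ($\mathbf a\to\mathbf a$), $\hat e_k1_{\mathbf a}$ same shape $\mathbf a\to\mathsf s_k\mathbf a$; these are $0$ when the condition fails; $s_k=\sum_{\mathbf a}s_k1_{\mathbf a}$ etc. For $\omega=(\omega_j)_{j\ge0}\subset\mathbb C$, $\mathsf{VBr}_{r,t}(\omega)$ is the quotient of the free product $\mathrm{Br}_{r,t}(\omega_0)*\mathbb C[y_1,\dots,y_{r+t}]$ by: $y_i$ commutes with all $1_{\mathbf a}$, and with $s_k,\hat s_k,e_k,\hat e_k$ when $i\notin\{k,k+1\}$; $e_1y_1^je_11_{\mathbf a}=\omega_je_11_{\mathbf a}$ for $j\ge0$ and $(a_1,a_2)=(\wedge,\vee)$; for $a_k=a_{k+1}$: $s_ky_k1_{\mathbf a}-y_{k+1}s_k1_{\mathbf a}=-1_{\mathbf a}$, $s_ky_{k+1}1_{\mathbf a}-y_ks_k1_{\mathbf a}=1_{\mathbf a}$; $\hat s_ky_k-y_{k+1}\hat s_k=\hat e_k$, $\hat s_ky_{k+1}-y_k\hat s_k=-\hat e_k$; $e_k,\hat e_k$ are annihilated on both sides by $y_k+y_{k+1}$. $1_{\mathbf a}M_{\mathbf i}=\{v\in1_{\mathbf a}M:(y_k-\mathrm i_k)^Nv=0\ \forall k,\ N\gg0\}$ (generalized simultaneous eigenspace). *)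

From HB Require Import structures.
From mathcomp Require Import all_boot all_order all_algebra all_fingroup.
From mathcomp Require Import complex Rstruct.
Set Implicit Arguments.
Unset Strict Implicit.
Unset Printing Implicit Defensive.
Import GRing.Theory.
Local Open Scope ring_scope.

Definition C := complex Rdefinitions.R.

(* Oriented Brauer diagrams on n = r + t points per row.              *)
(* Labels: true = wedge (^), false = vee (v).                         *)
(* Points: (false, i) = i-th point of the bottom row,                 *)
(*         (true, i)  = i-th point of the top row (0-based).          *)
Definition rawdiag (n : nat) :=
  (n.-tuple bool * n.-tuple bool * {ffun bool * 'I_n -> bool * 'I_n})%type.

Definition dbot n (d : rawdiag n) := d.1.1.
Definition dtop n (d : rawdiag n) := d.1.2.
Definition dmatch n (d : rawdiag n) := d.2.

Definition plabel n (d : rawdiag n) (x : bool * 'I_n) : bool :=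
  if x.1 then tnth (dtop d) x.2 else tnth (dbot d) x.2.

(* A basis diagram  a -> b  of Br_{r,t}: a perfect matching (fixed-point-free
   involution) of the 2n points, with a, b in Seq_{r,t}; strands joining
   the two rows join equal labels, strands within a row join different labels. *)
Definition valid_diag (r t : nat) (d : rawdiag (r + t)) : bool :=
  [&& count id (dbot d) == r, count id (dtop d) == r &
   [forall x, [&& dmatch d (dmatch d x) == x, dmatch d x != x &
      if (dmatch d x).1 == x.1 then plabel d (dmatch d x) != plabel d x
      else plabel d (dmatch d x) == plabel d x]]].

Definition diag (r t : nat) := {d : rawdiag (r + t) | valid_diag d}.

(* Stacking: d1 on top of d2 (the product d1 * d2, second factor below).
   Combined picture has three rows of n points: level 0 = bottom of d2,
   level 1 = top of d2 = bottom of d1, level 2 = top of d1. *)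
Section Compose.
Variables (n : nat) (d1 d2 : rawdiag n).

Definition cpt := ('I_3 * 'I_n)%type.
Definition lvl0 : 'I_3 := ord0.
Definition lvl1 : 'I_3 := inord 1.
Definition lvl2 : 'I_3 := ord_max.

Definition lift_low (x : bool * 'I_n) : cpt := (if x.1 then lvl1 else lvl0, x.2).
Definition lift_up (x : bool * 'I_n) : cpt := (if x.1 then lvl2 else lvl1, x.2).

Definition cedge : rel cpt := fun u v =>
  (((u.1 == lvl0) || (u.1 == lvl1)) &&
     (v == lift_low (dmatch d2 (u.1 == lvl1, u.2))))
  || (((u.1 == lvl1) || (u.1 == lvl2)) &&
     (v == lift_up (dmatch d1 (u.1 == lvl2, u.2)))).

Definition outer (x : bool * 'I_n) : cpt := (if x.1 then lvl2 else lvl0, x.2).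

Definition comp_match (x : bool * 'I_n) : bool * 'I_n :=
  odflt x [pick y | (y != x) && connect cedge (outer x) (outer y)].

Definition comp_raw : rawdiag n := (dbot d2, dtop d1, [ffun x => comp_match x]).

(* number of closed loops: connected components of the stacked picture
   consisting of middle points only (counted by their least middle point) *)
Definition nloops : nat :=
  #|[set m : 'I_n |
      [forall x : bool * 'I_n, ~~ connect cedge (lvl1, m) (outer x)] &&
      [forall m' : 'I_n, (m' < m)%N ==> ~~ connect cedge (lvl1, m) (lvl1, m')]]|.
End Compose.

(* A representation on M = C^m (column vectors) is given by matrices.
   The action of a raw diagram: the action of the corresponding basis
   element if it is a valid diagram, and 0 otherwise. *)
Definition act (r t m : nat) (rho : diag r t -> 'M[C]_m) (d : rawdiag (r + t)) :
  'M[C]_m := if insub d is Some d' then rho d' else 0.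

Section Generators.
Variable n : nat.

(* position k+1 (0-based), as an element of 'I_n (meaningful when k.+1 < n) *)
Definition succo (k : 'I_n) : 'I_n := insubd k k.+1.
Definition swp (k : 'I_n) : {perm 'I_n} := tperm k (succo k).

Definition sk_seq (k : 'I_n) (a : n.-tuple bool) : n.-tuple bool :=
  [tuple tnth a (swp k j) | j < n].
Definition sk_vec (k : 'I_n) (i : 'I_n -> C) : 'I_n -> C := fun j => i (swp k j).

Definition id_raw (a : n.-tuple bool) : rawdiag n :=
  (a, a, [ffun x : bool * 'I_n => (~~ x.1, x.2)]).
Definition cross_raw (k : 'I_n) (a : n.-tuple bool) : rawdiag n :=
  (a, sk_seq k a, [ffun x : bool * 'I_n => (~~ x.1, swp k x.2)]).
(* cap at bottom k,k+1, cup at top k,k+1, vertical strands elsewhere;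
   labels a -> b  (b = a for e_k, b = s_k a for \hat e_k) *)
Definition capcup_raw (k : 'I_n) (a b : n.-tuple bool) : rawdiag n :=
  (a, b, [ffun x : bool * 'I_n =>
            if x.2 == k then (x.1, succo k)
            else if x.2 == succo k then (x.1, k)
            else (~~ x.1, x.2)]).
End Generators.

Section Action.
Variables (r t m : nat) (rho : diag r t -> 'M[C]_m).
Local Notation n := (r + t).

Definition one (a : n.-tuple bool) := act rho (id_raw a).
Definition s_a (k : 'I_n) (a : n.-tuple bool) :=
  if tnth a k == tnth a (succo k) then act rho (cross_raw k a) else 0.
Definition sh_a (k : 'I_n) (a : n.-tuple bool) :=
  if tnth a k != tnth a (succo k) then act rho (cross_raw k a) else 0.
Definition e_a (k : 'I_n) (a : n.-tuple bool) :=
  if tnth a k != tnth a (succo k) then act rho (capcup_raw k a a) else 0.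
Definition eh_a (k : 'I_n) (a : n.-tuple bool) :=
  if tnth a k != tnth a (succo k) then act rho (capcup_raw k a (sk_seq k a)) else 0.

Definition s_ (k : 'I_n) := \sum_(a : n.-tuple bool) s_a k a.
Definition sh_ (k : 'I_n) := \sum_(a : n.-tuple bool) sh_a k a.
Definition e_ (k : 'I_n) := \sum_(a : n.-tuple bool) e_a k a.
Definition eh_ (k : 'I_n) := \sum_(a : n.-tuple bool) eh_a k a.
End Action.

Definition is_Br_module (r t m : nat) (gamma : C) (rho : diag r t -> 'M[C]_m) : Prop :=
  (forall d1 d2 : diag r t,
     rho d1 *m rho d2 =
     if dbot (val d1) == dtop (val d2)
     then gamma ^+ nloops (val d1) (val d2) *: act rho (comp_raw (val d1) (val d2))
     else 0)
  /\ \sum_(a : (r + t).-tuple bool) one rho a = 1%:M.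

(* Left VBr_{r,t}(omega)-module structure on C^m: a Br_{r,t}(omega_0)-module
   structure rho together with an action y of C[y_1,...,y_{r+t}] (pairwise
   commuting matrices) satisfying the defining relations of VBr_{r,t}(omega).
   Indices are 0-based: y k corresponds to y_{k+1} of the paper. *)
Definition is_VBr_module (r t m : nat) (omega : nat -> C)
    (rho : diag r t -> 'M[C]_m) (y : 'I_(r + t) -> 'M[C]_m) : Prop :=
  is_Br_module (omega 0%N) rho /\
  (forall i j, y i *m y j = y j *m y i) /\
  (forall i a, y i *m one rho a = one rho a *m y i) /\
      (forall (i k : 'I_(r + t)), (k.+1 < r + t)%N -> i != k -> i != succo k ->
         [/\ y i *m s_ rho k = s_ rho k *m y i,
             y i *m sh_ rho k = sh_ rho k *m y i,
             y i *m e_ rho k = e_ rho k *m y i &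
             y i *m eh_ rho k = eh_ rho k *m y i]) /\
      (forall (k0 : 'I_(r + t)) (j : nat) (a : (r + t).-tuple bool),
         val k0 = 0%N -> (1 < r + t)%N ->
         tnth a k0 = true -> tnth a (succo k0) = false ->
         e_ rho k0 *m (y k0 ^+ j) *m e_ rho k0 *m one rho a =
         omega j *: (e_ rho k0 *m one rho a)) /\
      (forall (k : 'I_(r + t)), (k.+1 < r + t)%N ->
         [/\ (forall a : (r + t).-tuple bool, tnth a k = tnth a (succo k) ->
                s_ rho k *m y k *m one rho a - y (succo k) *m s_ rho k *m one rho a
                  = - one rho a
                /\ s_ rho k *m y (succo k) *m one rho a - y k *m s_ rho k *m one rho a
                  = one rho a),
             sh_ rho k *m y k - y (succo k) *m sh_ rho k = eh_ rho k,
             sh_ rho k *m y (succo k) - y k *m sh_ rho k = - eh_ rho k,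
             ((y k + y (succo k)) *m e_ rho k = 0 /\ e_ rho k *m (y k + y (succo k)) = 0) &
             ((y k + y (succo k)) *m eh_ rho k = 0 /\ eh_ rho k *m (y k + y (succo k)) = 0)]).

(* v lies in 1_a M_i : v in the image of 1_a, and v is a generalized
   simultaneous eigenvector of the y_k with eigenvalues i_k. *)
Definition in_aMi (r t m : nat) (rho : diag r t -> 'M[C]_m) (y : 'I_(r + t) -> 'M[C]_m)
    (a : (r + t).-tuple bool) (i : 'I_(r + t) -> C) (v : 'cV[C]_m) : Prop :=
  (exists w : 'cV[C]_m, v = one rho a *m w) /\
  (forall k : 'I_(r + t), exists N : nat, (y k - (i k)%:M) ^+ N *m v = 0).

(* For v in 1_a M_i put u := (y_{k+1} - i_{k+1}) v, which again lies in 1_a M_i.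
   The intertwiner Phi := s_k 1_a (y_k - y_{k+1}) + 1_a in case (a), resp.
   Phi := \hat s_k 1_a (y_k + y_{k+1}) in case (b), exchanges y_k and y_{k+1} and
   commutes with the other y_j, so Phi v lies in 1_{s_k a} M_{s_k i} and the
   hypothesis gives Phi u = (y_k - i_{k+1}) Phi v = 0.
   In case (a), Phi^2 = 1_a - 1_a (y_k - y_{k+1})^2 forces (y_k - y_{k+1})^2 u = u,
   so u is a sum of eigenvectors of y_k - y_{k+1} for the eigenvalues 1 and -1; but
   on 1_a M_i that operator has the single eigenvalue i_k - i_{k+1}, which is not
   +-1. In case (b), \hat s_k Phi = 1_a (y_k + y_{k+1}) gives (y_k + y_{k+1}) u = 0,
   while y_k + y_{k+1} has the single eigenvalue i_k + i_{k+1} <> 0 on 1_a M_i.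
   The only input from the diagram calculus is that two stacked crossings compose
   to the identity diagram. *)

From HB Require Import structures.
From mathcomp Require Import all_boot all_order all_algebra all_fingroup.
From mathcomp Require Import complex Rstruct.
Set Implicit Arguments.
Unset Strict Implicit.
Unset Printing Implicit Defensive.
Import GRing.Theory.
Local Open Scope ring_scope.

Lemma lvl1E : nat_of_ord lvl1 = 1%N.
Proof. by rewrite /lvl1 inordK. Qed.

Lemma lvl01 : (lvl0 == lvl1) = false. Proof. by rewrite -val_eqE /= lvl1E. Qed.
Lemma lvl10 : (lvl1 == lvl0) = false. Proof. by rewrite -val_eqE /= lvl1E. Qed.
Lemma lvl12 : (lvl1 == lvl2) = false. Proof. by rewrite -val_eqE /= lvl1E. Qed.
Lemma lvl21 : (lvl2 == lvl1) = false. Proof. by rewrite -val_eqE /= lvl1E. Qed.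
Lemma lvl02 : (lvl0 == lvl2) = false. Proof. by rewrite -val_eqE. Qed.
Lemma lvl20 : (lvl2 == lvl0) = false. Proof. by rewrite -val_eqE. Qed.

Definition lvlE := (lvl01, lvl10, lvl12, lvl21, lvl02, lvl20, eqxx).

Lemma lvlP (l : 'I_3) : [\/ l = lvl0, l = lvl1 | l = lvl2].
Proof.
case: l => [[|[|[|//]]] ?]; [apply: Or31 | apply: Or32 | apply: Or33];
  by apply/val_inj; rewrite /= ?lvl1E.
Qed.

Section Crossing.
Variable n : nat.
Implicit Types (k : 'I_n) (a b : n.-tuple bool).

Lemma swpK k : involutive (swp k).
Proof. by move=> j; rewrite /swp tpermK. Qed.

Lemma tnth_sk_seq k a j : tnth (sk_seq k a) j = tnth a (swp k j).
Proof. by rewrite tnth_mktuple. Qed.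

Lemma sk_seqK k : involutive (sk_seq k).
Proof. by move=> a; apply: eq_from_tnth => j; rewrite !tnth_sk_seq swpK. Qed.

Lemma count_sk_seq k a : count id (sk_seq k a) = count id a.
Proof.
have /seq.permP-> // : perm_eq (sk_seq k a) a.
by apply/tuple_permP; exists (swp k).
Qed.

Lemma sk_seq_id k a : tnth a k = tnth a (succo k) -> sk_seq k a = a.
Proof.
by move=> eq_a; apply: eq_from_tnth => j; rewrite tnth_sk_seq /swp; case: tpermP => [->|->|].
Qed.

Lemma tnth_sk_seq_swapped k a :
  tnth (sk_seq k a) k = tnth a (succo k) /\ tnth (sk_seq k a) (succo k) = tnth a k.
Proof. by rewrite !tnth_sk_seq /swp tpermL tpermR. Qed.

Lemma dmatch_cross k a x : dmatch (cross_raw k a) x = (~~ x.1, swp k x.2).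
Proof. by rewrite /dmatch ffunE. Qed.

Variables (k : 'I_n) (a b : n.-tuple bool).
Local Notation d1 := (cross_raw k b).
Local Notation d2 := (cross_raw k a).

(* In the stacked picture of two crossings, the strand through position [j]
   at the outer levels passes through position [swp k j] at the middle level. *)
Definition cross_strand (j : 'I_n) : {pred cpt n} :=
  [pred u : cpt n | if u.1 == lvl1 then u.2 == swp k j else u.2 == j].

Lemma cedge_cross (u v : cpt n) : cedge d1 d2 u v ->
  v.2 = swp k u.2 /\ [\/ u.1 = lvl0 /\ v.1 = lvl1, u.1 = lvl1 /\ v.1 = lvl0,
                         u.1 = lvl1 /\ v.1 = lvl2 | u.1 = lvl2 /\ v.1 = lvl1].
Proof.
case: u v => l p [l' p']; rewrite /cedge !dmatch_cross /lift_low /lift_up /=.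
case: (lvlP l) => ->; rewrite !lvlE /= ?orbF.
- by case/eqP=> -> ->; split=> //; apply: Or41.
- by case/orP=> /eqP[-> ->]; split=> //; [apply: Or42 | apply: Or43].
- by case/eqP=> -> ->; split=> //; apply: Or44.
Qed.

Lemma cross_strand_closed j : closed (cedge d1 d2) (cross_strand j).
Proof.
move=> u v /cedge_cross[v2 lv]; rewrite !inE v2.
have swp_eq p q : (swp k p == q) = (p == swp k q).
  by rewrite -{1}(swpK k q) (inj_eq (can_inj (swpK k))).
by case: lv => -[-> ->]; rewrite !lvlE swp_eq ?swpK.
Qed.

Lemma cedge_cross_steps j :
  [/\ cedge d1 d2 (lvl0, j) (lvl1, swp k j), cedge d1 d2 (lvl1, j) (lvl2, swp k j),
      cedge d1 d2 (lvl2, j) (lvl1, swp k j) & cedge d1 d2 (lvl1, j) (lvl0, swp k j)].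
Proof. by split; rewrite /cedge !dmatch_cross /lift_low /lift_up /= !lvlE ?orbT. Qed.

Lemma connect_cross_through j :
  connect (cedge d1 d2) (lvl0, j) (lvl2, j) /\ connect (cedge d1 d2) (lvl2, j) (lvl0, j).
Proof.
have [e01 _ e21 _] := cedge_cross_steps j.
have [_ e12 _ e10] := cedge_cross_steps (swp k j); rewrite swpK in e12 e10.
by split; apply: connect_trans (connect1 _) (connect1 _); eassumption.
Qed.

Lemma comp_match_cross x : comp_match d1 d2 x = (~~ x.1, x.2).
Proof.
case: x => x1 j; rewrite /comp_match; case: pickP => [[y1 y2] /andP[y_neq c] | none] /=.
  have := closed_connect (cross_strand_closed j) c; clear c.
  move: y_neq; rewrite !inE; case: x1; case: y1; rewrite /= !lvlE /=;
    by move=> + /esym/eqP y2j; rewrite y2j ?eqxx.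
have [up down] := connect_cross_through j.
have := none (~~ x1, j); rewrite /= xpair_eqE eqxx andbT; clear none.
by case: x1; rewrite /outer /= ?up ?down.
Qed.

Lemma nloops_cross : nloops d1 d2 = 0%N.
Proof.
apply/eqP; rewrite cards_eq0; apply/eqP/setP => j; rewrite !inE; apply/negbTE.
rewrite negb_and negb_forall; apply/orP; left; apply/existsP; exists (true, swp k j).
by have [_ e12 _ _] := cedge_cross_steps j; rewrite negbK connect1.
Qed.

Lemma comp_cross_cross : comp_raw d1 d2 = (dbot d2, dtop d1, dmatch (id_raw a)).
Proof. by congr (_, _, _); apply/ffunP => x; rewrite !ffunE comp_match_cross. Qed.

End Crossing.

Lemma cross_valid r t (k : 'I_(r + t)) (a : (r + t).-tuple bool) :
  count id a = r -> valid_diag (cross_raw k a).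
Proof.
move=> ca; rewrite /valid_diag /dbot /dtop /= count_sk_seq ca eqxx /=.
apply/forallP => -[x1 j]; rewrite !(dmatch_cross k a) /= swpK negbK eqxx /plabel /=.
by case: x1; rewrite /= ?tnth_sk_seq ?swpK eqxx.
Qed.

Section BrauerModule.
Variables (r t m : nat) (gamma : C) (rho : diag r t -> 'M[C]_m).
Hypothesis rhoBr : is_Br_module gamma rho.
Local Notation n := (r + t).
Implicit Types (k : 'I_n) (a b c : n.-tuple bool) (F : pred (n.-tuple bool)).

Lemma act_mul_mismatch (d1 d2 : rawdiag n) : dbot d1 != dtop d2 ->
  act rho d1 *m act rho d2 = 0.
Proof.
rewrite /act => neq; case: insubP => [d1' _ e1|_]; last by rewrite mul0mx.
by case: insubP => [d2' _ e2|_]; rewrite ?mulmx0 // rhoBr.1 e1 e2 (negbTE neq).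
Qed.

Lemma act_cross_cross k a : count id a = r ->
  act rho (cross_raw k (sk_seq k a)) *m act rho (cross_raw k a) = one rho a.
Proof.
move=> ca; have ca' : count id (sk_seq k a) = r by rewrite count_sk_seq.
rewrite /act (insubT _ (cross_valid k ca)) (insubT _ (cross_valid k ca')) rhoBr.1 /=.
rewrite [dbot _ == _]eqxx nloops_cross expr0 scale1r comp_cross_cross.
by rewrite /one /dbot /dtop /= sk_seqK.
Qed.

Lemma one_mul_id b (M : 'M[C]_m) : (forall c, c != b -> one rho c *m M = 0) ->
  one rho b *m M = M.
Proof.
move=> Mb; rewrite -{2}[M]mul1mx -rhoBr.2 mulmx_suml (bigD1 b) //=.
by rewrite big1 ?addr0.
Qed.

Lemma one_idem a : one rho a *m one rho a = one rho a.
Proof. by apply: one_mul_id => c neq; apply: act_mul_mismatch. Qed.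

(* [s_ rho k] and [sh_ rho k] are [cross_sum F k] for [F b] meaning
   [b_k = b_(k+1)], resp. [b_k <> b_(k+1)]. *)
Definition cross_if F k b : 'M[C]_m :=
  if F b then act rho (cross_raw k b) else 0.

Definition cross_sum F k := \sum_(b : n.-tuple bool) cross_if F k b.

Lemma cross_sum_one F k a : cross_sum F k *m one rho a = cross_if F k a *m one rho a.
Proof.
rewrite mulmx_suml (bigD1 a) //= big1 ?addr0 // => b neq.
by rewrite /cross_if; case: ifP; rewrite ?mul0mx // => _; apply: act_mul_mismatch.
Qed.

Lemma one_cross_sum_one F k a :
  one rho (sk_seq k a) *m (cross_sum F k *m one rho a) = cross_sum F k *m one rho a.
Proof.
apply: one_mul_id => c neq; rewrite cross_sum_one mulmxA /cross_if.
by case: ifP; rewrite ?mulmx0 ?mul0mx // => _; rewrite act_mul_mismatch ?mul0mx.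
Qed.

Lemma cross_sumK F k a : F a -> F (sk_seq k a) -> count id a = r ->
  cross_sum F k *m (cross_sum F k *m one rho a) = one rho a.
Proof.
move=> Fa Fka ca; rewrite cross_sum_one !mulmxA /cross_sum mulmx_suml.
rewrite (bigD1 (sk_seq k a)) //= big1 ?addr0 => [|b neq].
  by rewrite /cross_if Fa Fka act_cross_cross // one_idem.
rewrite /cross_if; case: ifP; rewrite ?mul0mx // => _.
by case: ifP; rewrite ?mulmx0 // => _; rewrite act_mul_mismatch.
Qed.

End BrauerModule.

Section Intertwiner.
Variables (R : pzRingType) (P S X Y : R).
Hypotheses (PP : P * P = P) (PS : P * S = S) (SP : S * P = S) (SS : S * S = P).
Hypotheses (XP : GRing.comm X P) (YP : GRing.comm Y P) (XY : GRing.comm X Y).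
Hypotheses (SX : S * X - Y * S = - P) (SY : S * Y - X * S = P).
Local Notation D := (X - Y).
Local Notation Phi := (S * D + P).

Let YS : Y * S = S * X + P.
Proof. by rewrite -[Y * S](subrK (S * X)) -opprB SX opprK addrC. Qed.
Let XS : X * S = S * Y - P.
Proof. by rewrite -SY opprB addrC subrK. Qed.
Let DX : GRing.comm D X. Proof. exact/commr_sym/commrB/commr_sym. Qed.
Let DY : GRing.comm D Y. Proof. exact/commr_sym/commrB. Qed.
Let DP : GRing.comm D P. Proof. exact/commr_sym/commrB/commr_sym/commr_sym. Qed.

Lemma intertwiner_mulX : Phi * X = Y * Phi.
Proof.
rewrite mulrDl [Y * _]mulrDr -mulrA DX mulrA [Y * _]mulrA YS mulrDl -addrA; congr (_ + _).
by rewrite mulrBr YP subrK.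
Qed.

Lemma intertwiner_mulY : Phi * Y = X * Phi.
Proof.
rewrite mulrDl [X * _]mulrDr -mulrA DY mulrA [X * _]mulrA XS mulrBl -addrA; congr (_ + _).
by rewrite mulrBr XP opprB subrK.
Qed.

Lemma idem_mul_intertwiner : P * Phi = Phi.
Proof. by rewrite mulrDr mulrA PS PP. Qed.

Lemma intertwiner_sqr : Phi * Phi = P - P * D * D.
Proof.
have DS : D * S = - (S * D) - P - P.
  by rewrite mulrBl XS YS mulrBr opprD opprB addrA (addrAC (S * Y)).
move: DS DP; set d := X - Y => DS dP; clearbody d.
have -> : (S * d + P) * (S * d + P) = S * (d * S) * d + P * S * d + S * (d * P) + P * P.
  by rewrite mulrDr !mulrDl !mulrA addrA.
rewrite DS dP PS PP !mulrA SP !mulrBr !mulrBl mulrN mulNr !mulrA SS SP.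
by rewrite !subrK addrC.
Qed.

End Intertwiner.

Section IntertwinerSum.
Variables (R : pzRingType) (S E X Y : R).
Hypotheses (XY : GRing.comm X Y) (E_XY : E * (X + Y) = 0).
Hypotheses (SX : S * X = Y * S + E) (SY : S * Y = X * S - E).

Lemma intertwiner_sum_mulX : S * (X + Y) * X = Y * (S * (X + Y)).
Proof.
have XYX : GRing.comm (X + Y) X by apply/commr_sym/commrD => //; apply: commr_sym.
by rewrite -mulrA XYX mulrA SX mulrDl E_XY addr0 mulrA.
Qed.

Lemma intertwiner_sum_mulY : S * (X + Y) * Y = X * (S * (X + Y)).
Proof.
have XYY : GRing.comm (X + Y) Y by apply/commr_sym/commrD.
by rewrite -mulrA XYY mulrA SY mulrBl E_XY subr0 mulrA.
Qed.

End IntertwinerSum.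

Section GeneralizedEigenvectors.
Variables (R : fieldType) (m : nat).
Implicit Types (A B W : 'M[R]_m) (u w : 'cV[R]_m).

Definition gen_eigvec A (c : R) u := exists N, (A - c%:M) ^+ N *m u = 0.

Lemma comm_scalar_mx A (c : R) : GRing.comm A c%:M.
Proof. by rewrite /GRing.comm -!mulmxE scalar_mxC. Qed.

Lemma intertwine_shift_exp W A B (c : R) N : W * A = B * W ->
  (B - c%:M) ^+ N * W = W * (A - c%:M) ^+ N.
Proof.
move=> WA; have WAc : (B - c%:M) * W = W * (A - c%:M).
  by rewrite mulrBl mulrBr WA comm_scalar_mx.
elim: N => [|N IH]; first by rewrite !expr0 mul1r mulr1.
by rewrite exprS -mulrA IH mulrA WAc -mulrA -exprS.
Qed.

Lemma gen_eigvec_intertwine W A B c u : W * A = B * W ->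
  gen_eigvec A c u -> gen_eigvec B c (W *m u).
Proof.
move=> WA [N uN]; exists N.
by rewrite mulmxA mulmxE (intertwine_shift_exp _ _ WA) -mulmxE -mulmxA uN mulmx0.
Qed.

Lemma gen_eigvecB A c u w :
  gen_eigvec A c u -> gen_eigvec A c w -> gen_eigvec A c (u - w).
Proof.
move=> [N uN] [M wM]; exists (N + M)%N.
by rewrite mulmxBr {1}addnC !exprD -!mulmxE -!mulmxA uN wM !mulmx0 subr0.
Qed.

Lemma gen_eigvecN A c u : gen_eigvec A c u -> gen_eigvec (- A) (- c) u.
Proof.
move=> [N uN]; exists N.
by rewrite raddfN -opprD exprNn -mulmxE -mulmxA uN mulmx0.
Qed.

Lemma gen_eigvecD A B a b u : GRing.comm A B ->
  gen_eigvec A a u -> gen_eigvec B b u -> gen_eigvec (A + B) (a + b) u.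
Proof.
move=> AB [N uN] [M uM]; exists (N + M)%N.
have -> : A + B - (a + b)%:M = (A - a%:M) + (B - b%:M).
  by rewrite raddfD opprD addrACA.
have ABc : GRing.comm (A - a%:M) (B - b%:M).
  apply: commrB (comm_scalar_mx _ _); apply/commr_sym.
  exact: commrB (commr_sym AB) (comm_scalar_mx _ _).
rewrite exprDn_comm // mulmx_suml big1 // => j _.
rewrite -scaler_nat -scalemxAl; apply/eqP; rewrite scaler_eq0; apply/orP; right; apply/eqP.
have [Mj | jM] := leqP M j.
  by rewrite -(subnK Mj) exprD mulrA -mulmxE -mulmxA uM mulmx0.
have NMj : (N <= N + M - j)%N by rewrite -addnBA ?leq_addr // ltnW.
rewrite -(subnK NMj) exprD -mulrA -(commrX _ (commr_sym (commrX _ ABc))).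
by rewrite mulrA -mulmxE -mulmxA uN mulmx0.
Qed.

Lemma gen_eigvec_eigvec_eq0 A c g u :
  gen_eigvec A c u -> A *m u = g *: u -> g != c -> u = 0.
Proof.
move=> [N uN] Au gc.
have Acu j : (A - c%:M) ^+ j *m u = (g - c) ^+ j *: u.
  elim: j => [|j IH]; first by rewrite !expr0 mul1mx scale1r.
  by rewrite exprSr -mulmxE -mulmxA mulmxBl Au mul_scalar_mx -scalerBl -scalemxAr IH scalerA -exprS.
by move: uN; rewrite Acu => /eqP; rewrite scaler_eq0 expf_eq0 subr_eq0 (negbTE gc) andbF => /eqP.
Qed.

End GeneralizedEigenvectors.

Section VBrauerModule.
Variables (r t m : nat) (omega : nat -> C) (rho : diag r t -> 'M[C]_m).
Variable y : 'I_(r + t) -> 'M[C]_m.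
Hypothesis yVBr : is_VBr_module omega rho y.
Local Notation n := (r + t).
Variable k : 'I_n.
Hypothesis hk : (k.+1 < n)%N.
Local Notation X := (y k).
Local Notation Y := (y (succo k)).
Implicit Types (a b : n.-tuple bool) (i : 'I_n -> C) (v : 'cV[C]_m).

Let rhoBr : is_Br_module (omega 0%N) rho := yVBr.1.
Let yC p q : GRing.comm (y p) (y q). Proof. by rewrite /GRing.comm -!mulmxE yVBr.2.1. Qed.
Let yP p a : GRing.comm (y p) (one rho a). Proof. by rewrite /GRing.comm -!mulmxE yVBr.2.2.1. Qed.
Let P_idem a : one rho a * one rho a = one rho a. Proof. by rewrite -mulmxE (one_idem rhoBr). Qed.

Lemma in_aMi_shift p c a i v : in_aMi rho y a i v -> in_aMi rho y a i ((y p - c%:M) *m v).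
Proof.
have Wy j : GRing.comm (y p - c%:M) (y j).
  by apply/commr_sym/commrB; [apply: yC | apply: comm_scalar_mx].
move=> [[w ->] v_eig]; split; last by move=> j; apply: gen_eigvec_intertwine (v_eig j); rewrite Wy.
exists ((y p - c%:M) *m w); rewrite !mulmxA !mulmxE.
by congr (_ *m _); apply/commr_sym/commrB; [apply/commr_sym/yP | apply: comm_scalar_mx].
Qed.

Lemma in_aMi_intertwine W a b i v : one rho b * W = W ->
  W * X = Y * W -> W * Y = X * W ->
  (forall j, j != k -> j != succo k -> GRing.comm W (y j)) ->
  in_aMi rho y a i v -> in_aMi rho y b (sk_vec k i) (W *m v).
Proof.
move=> bW WX WY Wy [[w ->] v_eig]; split.
  by exists (W *m one rho a *m w); rewrite !mulmxA mulmxE bW.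
move=> j; rewrite /sk_vec /swp; apply: gen_eigvec_intertwine (v_eig _).
by case: tpermP => [->|->|jk jsk] //; apply: Wy; apply/eqP.
Qed.

Let local_rel := yVBr.2.2.2.2.2 k hk.

Lemma s_one_relations a : count id a = r -> tnth a k = tnth a (succo k) ->
  let P := one rho a in let S := s_ rho k * P in
  [/\ P * S = S, S * P = S, S * S = P, S * X - Y * S = - P & S * Y - X * S = P].
Proof.
move=> ca eq_a P S; pose F b := tnth b k == tnth b (succo k).
have Fa : F a by rewrite /F eq_a.
have [s_rel _ _ _ _] := local_rel; have [s_X s_Y] := s_rel a eq_a.
rewrite !mulmxE in s_X s_Y.
have PS : P * S = S.
  by rewrite /S /P -!mulmxE -{1}(sk_seq_id eq_a) (one_cross_sum_one rhoBr F).
split=> //; first by rewrite -mulrA P_idem.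
- have Fka : F (sk_seq k a) by rewrite sk_seq_id.
  by rewrite {1}/S -mulrA PS /S /P -!mulmxE (cross_sumK rhoBr Fa Fka ca).
- by rewrite /S -!mulrA -(yP k a) !mulrA s_X.
- by rewrite /S -!mulrA -(yP (succo k) a) !mulrA s_Y.
Qed.

Lemma sh_one_relations a : count id a = r -> tnth a k != tnth a (succo k) ->
  let P := one rho a in let S := sh_ rho k * P in let E := eh_ rho k * P in
  [/\ one rho (sk_seq k a) * S = S, sh_ rho k * S = P, S * X = Y * S + E,
      S * Y = X * S - E & E * (X + Y) = 0].
Proof.
move=> ca neq_a P S E; pose F b := tnth b k != tnth b (succo k).
have [_ sh_X sh_Y _ [_ eh_XY]] := local_rel.
rewrite !mulmxE in sh_X sh_Y eh_XY.
have {}sh_X : sh_ rho k * X = Y * sh_ rho k + eh_ rho k by rewrite -sh_X addrC subrK.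
have {}sh_Y : sh_ rho k * Y = X * sh_ rho k - eh_ rho k by rewrite -sh_Y (addrC (X * _)) subrK.
have Fa : F a by [].
have Fka : F (sk_seq k a).
  by rewrite /F (tnth_sk_seq_swapped k a).1 (tnth_sk_seq_swapped k a).2 eq_sym.
have PXY : GRing.comm (X + Y) P by apply/commr_sym/commrD; apply/commr_sym/yP.
split.
- by rewrite /S /P -!mulmxE (one_cross_sum_one rhoBr F).
- by rewrite /S /P -!mulmxE (cross_sumK rhoBr Fa Fka ca).
- by rewrite /S /E -mulrA -(yP k a) mulrA sh_X mulrDl mulrA.
- by rewrite /S /E -mulrA -(yP (succo k) a) mulrA sh_Y mulrBl mulrA.
- by rewrite /E -mulrA -PXY mulrA eh_XY mul0r.
Qed.

Lemma far_comm_crossings j : j != k -> j != succo k ->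
  GRing.comm (y j) (s_ rho k) /\ GRing.comm (y j) (sh_ rho k).
Proof.
by move=> jk jsk; have [s_j sh_j _ _] := yVBr.2.2.2.1 j k hk jk jsk; rewrite /GRing.comm -!mulmxE.
Qed.

Lemma in_aMi_one a i v : in_aMi rho y a i v -> one rho a *m v = v.
Proof. by move=> [[w ->] _]; rewrite mulmxA mulmxE P_idem. Qed.

Definition s_intertwiner a := s_ rho k * one rho a * (X - Y) + one rho a.
Definition sh_intertwiner a := sh_ rho k * one rho a * (X + Y).

Lemma s_intertwiner_spec a : count id a = r -> tnth a k = tnth a (succo k) ->
  let P := one rho a in let Phi := s_intertwiner a in
  [/\ P * Phi = Phi, Phi * X = Y * Phi, Phi * Y = X * Phi,
      (forall j, j != k -> j != succo k -> GRing.comm Phi (y j)) &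
      Phi * Phi = P - P * (X - Y) * (X - Y)].
Proof.
move=> ca eq_a P Phi; have [PS SP SS SX SY] := s_one_relations ca eq_a.
have XP := yP k a; have YP := yP (succo k) a; have XY := yC k (succo k).
split; [exact: idem_mul_intertwiner (P_idem a) PS | exact: intertwiner_mulX YP XY SX |
        exact: intertwiner_mulY XP XY SY | |
        exact: intertwiner_sqr (P_idem a) PS SP SS XP YP SX SY].
move=> j jk jsk; have [sj _] := far_comm_crossings jk jsk; apply/commr_sym.
exact: commrD (commrM (commrM sj (yP j a)) (commrB (yC j k) (yC j _))) (yP j a).
Qed.

Lemma sh_intertwiner_spec a : count id a = r -> tnth a k != tnth a (succo k) ->
  let P := one rho a in let Phi := sh_intertwiner a in
  [/\ one rho (sk_seq k a) * Phi = Phi, Phi * X = Y * Phi, Phi * Y = X * Phi,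
      (forall j, j != k -> j != succo k -> GRing.comm Phi (y j)) &
      sh_ rho k * Phi = P * (X + Y)].
Proof.
move=> ca neq_a P Phi; have [kS shS SX SY E0] := sh_one_relations ca neq_a.
split; [by rewrite mulrA kS | exact: intertwiner_sum_mulX (yC _ _) E0 SX |
        exact: intertwiner_sum_mulY (yC _ _) E0 SY | | by rewrite mulrA shS].
move=> j jk jsk; have [_ shj] := far_comm_crossings jk jsk; apply/commr_sym.
exact: commrM (commrM shj (yP j a)) (commrD (yC j k) (yC j _)).
Qed.

Lemma intertwiner_kills W a b i : one rho b * W = W -> W * X = Y * W -> W * Y = X * W ->
  (forall j, j != k -> j != succo k -> GRing.comm W (y j)) ->
  (forall v, in_aMi rho y b (sk_vec k i) v -> (X - (i (succo k))%:M) *m v = 0) ->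
  forall v, in_aMi rho y a i v -> W *m ((Y - (i (succo k))%:M) *m v) = 0.
Proof.
move=> bW WX WY Wy kill v v_ai.
have WYc : W * (Y - (i (succo k))%:M) = (X - (i (succo k))%:M) * W.
  by rewrite mulrBr mulrBl WY comm_scalar_mx.
by rewrite mulmxA mulmxE WYc -mulmxE -mulmxA kill ?mulmx0 //; apply: in_aMi_intertwine v_ai.
Qed.

Lemma in_aMi_gen_eigvec_pair a i v : in_aMi rho y a i v ->
  gen_eigvec (X + Y) (i k + i (succo k)) v /\ gen_eigvec (X - Y) (i k - i (succo k)) v.
Proof.
move=> [_ v_eig]; split.
  exact: gen_eigvecD (yC k _) (v_eig k) (v_eig _).
exact: gen_eigvecD (commrN (yC k _)) (v_eig k) (gen_eigvecN (v_eig _)).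
Qed.

Lemma s_intertwiner_kernel a i u : count id a = r -> tnth a k = tnth a (succo k) ->
  i (succo k) != i k + 1 -> i (succo k) != i k - 1 -> in_aMi rho y a i u ->
  s_intertwiner a *m u = 0 -> u = 0.
Proof.
move=> ca eq_a c1 c2 u_ai Phi_u.
have [_ _ _ _ Phi2] := s_intertwiner_spec ca eq_a.
have [_ eigD] := in_aMi_gen_eigvec_pair u_ai.
have Pu := in_aMi_one u_ai.
set D := X - Y in Phi2 eigD.
have DP : GRing.comm D (one rho a) by apply/commr_sym/commrB; apply/commr_sym/yP.
have DDu : D *m (D *m u) = u.
  apply/eqP; rewrite eq_sym -subr_eq0; apply/eqP.
  have := congr1 (mulmx (s_intertwiner a)) Phi_u.
  by rewrite mulmx0 mulmxA mulmxE Phi2 -DP -mulrA -DP -!mulmxE mulmxBl -!mulmxA !Pu.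
set w := D *m u - u.
have Dw : D *m w = (-1) *: w by rewrite /w mulmxBr DDu scaleN1r opprB.
have eigw : gen_eigvec D (i k - i (succo k)) w.
  exact: gen_eigvecB (gen_eigvec_intertwine (erefl (D * D)) eigD) eigD.
have w0 : w = 0.
  apply: gen_eigvec_eigvec_eq0 eigw Dw _; apply: contra_neq c1 => h.
  by rewrite -[1]opprK h opprB subrKC.
have Du : D *m u = 1 *: u by rewrite scale1r; apply/eqP; rewrite -subr_eq0 -/w w0.
apply: gen_eigvec_eigvec_eq0 eigD Du _; apply: contra_neq c2 => h.
by rewrite h opprB subrKC.
Qed.

Lemma sh_intertwiner_kernel a i u : count id a = r -> tnth a k != tnth a (succo k) ->
  i k + i (succo k) != 0 -> in_aMi rho y a i u -> sh_intertwiner a *m u = 0 -> u = 0.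
Proof.
move=> ca neq_a c0 u_ai Phi_u.
have [_ _ _ _ shPhi] := sh_intertwiner_spec ca neq_a.
have [eigS _] := in_aMi_gen_eigvec_pair u_ai.
have XYP : GRing.comm (X + Y) (one rho a) by apply/commr_sym/commrD; apply/commr_sym/yP.
have XYu : (X + Y) *m u = 0 *: u.
  have := congr1 (mulmx (sh_ rho k)) Phi_u.
  by rewrite mulmx0 mulmxA mulmxE shPhi -XYP -mulmxE -mulmxA (in_aMi_one u_ai) scale0r.
by apply: gen_eigvec_eigvec_eq0 eigS XYu _; rewrite eq_sym.
Qed.

Lemma eigvec_shift_same_labels a i : count id a = r -> tnth a k = tnth a (succo k) ->
  i (succo k) != i k + 1 -> i (succo k) != i k - 1 ->
  (forall v, in_aMi rho y a (sk_vec k i) v -> (X - (i (succo k))%:M) *m v = 0) ->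
  forall v, in_aMi rho y a i v -> (Y - (i (succo k))%:M) *m v = 0.
Proof.
move=> ca eq_a c1 c2 kill v v_ai.
have [PPhi PhiX PhiY Phiy _] := s_intertwiner_spec ca eq_a.
apply: s_intertwiner_kernel ca eq_a c1 c2 (in_aMi_shift _ _ v_ai) _.
exact: intertwiner_kills PPhi PhiX PhiY Phiy kill _ v_ai.
Qed.

Lemma eigvec_shift_distinct_labels a i : count id a = r -> tnth a k != tnth a (succo k) ->
  i k + i (succo k) != 0 ->
  (forall v, in_aMi rho y (sk_seq k a) (sk_vec k i) v -> (X - (i (succo k))%:M) *m v = 0) ->
  forall v, in_aMi rho y a i v -> (Y - (i (succo k))%:M) *m v = 0.
Proof.
move=> ca neq_a c0 kill v v_ai.
have [kPhi PhiX PhiY Phiy _] := sh_intertwiner_spec ca neq_a.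
apply: sh_intertwiner_kernel ca neq_a c0 (in_aMi_shift _ _ v_ai) _.
exact: intertwiner_kills kPhi PhiX PhiY Phiy kill _ v_ai.
Qed.

End VBrauerModule.

Theorem lemma3p4 (r t m : nat) (omega : nat -> C)
    (rho : diag r t -> 'M[C]_m) (y : 'I_(r + t) -> 'M[C]_m)
    (a : (r + t).-tuple bool) (i : 'I_(r + t) -> C) (k : 'I_(r + t)) :
  is_VBr_module omega rho y ->
  count id a = r ->
  (k.+1 < r + t)%N ->
  ( (tnth a k = tnth a (succo k) /\
     i (succo k) <> i k /\ i (succo k) <> i k + 1 /\ i (succo k) <> i k - 1 /\
     (forall v, in_aMi rho y a (sk_vec k i) v -> (y k - (i (succo k))%:M) *m v = 0))
  \/
    (tnth a k <> tnth a (succo k) /\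
     i k + i (succo k) <> 0 /\
     (forall v, in_aMi rho y (sk_seq k a) (sk_vec k i) v ->
        (y k - (i (succo k))%:M) *m v = 0)) ) ->
  forall v, in_aMi rho y a i v -> (y (succo k) - (i (succo k))%:M) *m v = 0.
Proof.
move=> yVBr ca hk [[eq_a [_ [c1 [c2 kill]]]] | [neq_a [c0 kill]]].
  by apply: (eigvec_shift_same_labels yVBr hk ca eq_a) kill; apply/eqP.
by apply: (eigvec_shift_distinct_labels yVBr hk ca) kill; apply/eqP.
Qed.
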